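(* Let $x^k\in\mathbb{R}^n$, let $G_k\in\mathcal{S}_{\ell,\mu}(F,x^k)$, let $x^{k+1}$ be the minimizer of $\min_{x\in\mathbb{R}^n}\max_{c^*\in C}\langle c^*,G_k(x)\rangle$, and let $c_k^*$ be a maximizer of $\max_{c^*\in C}\min_{x\in\mathbb{R}^n}\langle c^*,G_k(x)\rangle$. Then for all $x\in\mathbb{R}^n$: (i) $H_k(x)\preceq_K\tfrac12\|x-x^k\|^2\ell$; (ii) $\langle c_k^*,F(x^{k+1})\rangle+\tfrac12\|x^{k+1}-x\|^2\langle c_k^*,\mu\rangle\le\langle c_k^*,F(x)\rangle+\tfrac12\|x^k-x\|^2\langle c_k^*,\ell\rangle$.
   Context: $K\subset\mathbb{R}^m$ is a closed, convex, pointed cone with nonempty interior; $y\preceq_K y'$ means $y'-y\in K$. $K^*=\{c\in\mathbb{R}^m:\langle c,y\rangle\ge0\ \forall y\in K\}$, and $C\subset\mathbb{R}^m$ is a compact convex set with $0\notin C$ and $\mathrm{cone}(C)=K^*$. $F:\mathbb{R}^n\to\mathbb{R}^m$ is differentiable with Jacobian $JF$. For differentiable $\Phi$: strongly $K$-convex with $\mu\in K$ means $J\Phi(x)(y-x)+\tfrac12\|y-x\|^2\mu\preceq_K\Phi(y)-\Phi(x)$ for all $x,y$; $K$-smooth with $\ell\in K$ means $\Phi(y)-\Phi(x)\preceq_K J\Phi(x)(y-x)+\tfrac12\|y-x\|^2\ell$ for all $x,y$. Surrogate class: for $\ell\in K$, $\mu\in\mathrm{int}(K)$ and $x^k\in\mathbb{R}^n$,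 $\mathcal{S}_{\ell,\mu}(F,x^k)$ is the set of differentiable $G_k:\mathbb{R}^n\to\mathbb{R}^m$ that are strongly $K$-convex with $\mu$ and such that, with $x^{k+1}$ the (unique) minimizer of $x\mapsto\max_{c^*\in C}\langle c^*,G_k(x)\rangle$ and $H_k:=G_k-F+F(x^k)$: (a) $F(x^{k+1})-F(x^k)\preceq_K G_k(x^{k+1})$; (b) $H_k$ is $K$-smooth with $\ell$, $H_k(x^k)=0$ and $JH_k(x^k)=0$. *)

From HB Require Import structures.
From mathcomp Require Import all_boot all_order all_algebra.
From mathcomp Require Import all_classical all_reals all_analysis.
Set Implicit Arguments. Unset Strict Implicit. Unset Printing Implicit Defensive.
Import Order.TTheory GRing.Theory Num.Theory.
Import numFieldNormedType.Exports.
Local Open Scope classical_set_scope.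
Local Open Scope ring_scope.

Section Defs.
Variable R : realType.

Definition dotv (m : nat) (u v : 'rV[R]_m) : R := \sum_(i < m) u ord0 i * v ord0 i.
Definition sqnorm (m : nat) (v : 'rV[R]_m) : R := \sum_(i < m) v ord0 i ^+ 2.

Definition convex_setv (m : nat) (A : set 'rV[R]_m) : Prop :=
  forall x y (t : R), A x -> A y -> 0 <= t -> t <= 1 -> A ((1 - t) *: x + t *: y).

Definition is_cone (m : nat) (A : set 'rV[R]_m) : Prop :=
  forall (t : R) y, 0 <= t -> A y -> A (t *: y).

Definition pointed (m : nat) (A : set 'rV[R]_m) : Prop :=
  forall y, A y -> A (- y) -> y = 0.

Definition proper_cone (m : nat) (K : set 'rV[R]_m) : Prop :=
  [/\ closed K, convex_setv K, is_cone K, pointed K & K° !=set0].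

Definition cle (m : nat) (K : set 'rV[R]_m) (y y' : 'rV[R]_m) : Prop := K (y' - y).

Definition dual_cone (m : nat) (K : set 'rV[R]_m) : set 'rV[R]_m :=
  [set c | forall y, K y -> 0 <= dotv c y].

Definition cone_hull (m : nat) (C : set 'rV[R]_m) : set 'rV[R]_m :=
  [set v | v = 0 \/ exists t c, [/\ 0 <= t, C c & v = t *: c]].

Definition maxoverC (m : nat) (C : set 'rV[R]_m) (y : 'rV[R]_m) : R :=
  sup [set dotv c y | c in C].

Definition minoverX (n m : nat) (G : 'rV[R]_n -> 'rV[R]_m) (c : 'rV[R]_m) : R :=
  inf [set dotv c (G x) | x in [set: 'rV[R]_n]].

Definition strongly_Kconvex (n m : nat) (K : set 'rV[R]_m)
    (Phi : 'rV[R]_n -> 'rV[R]_m) (mu : 'rV[R]_m) : Prop :=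
  (forall x, differentiable Phi x) /\
  forall x y, cle K ('d Phi x (y - x) + (2^-1 * sqnorm (y - x)) *: mu) (Phi y - Phi x).

Definition Ksmooth (n m : nat) (K : set 'rV[R]_m)
    (Phi : 'rV[R]_n -> 'rV[R]_m) (l : 'rV[R]_m) : Prop :=
  (forall x, differentiable Phi x) /\
  forall x y, cle K (Phi y - Phi x) ('d Phi x (y - x) + (2^-1 * sqnorm (y - x)) *: l).

Definition Hk (n m : nat) (G F : 'rV[R]_n -> 'rV[R]_m) (xk : 'rV[R]_n) :=
  fun x => G x - F x + F xk.

(* surrogate class S_{l,mu}(F, x^k); the conditions (a) are required at the
   (unique) minimizer x^{k+1} of x |-> max_{c in C} <c, G x>, i.e. at every
   minimizer. *)
Definition surrogate (n m : nat) (K C : set 'rV[R]_m) (l mu : 'rV[R]_m)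
    (F : 'rV[R]_n -> 'rV[R]_m) (xk : 'rV[R]_n) (G : 'rV[R]_n -> 'rV[R]_m) : Prop :=
  [/\ strongly_Kconvex K G mu,
      (forall z, (forall x, maxoverC C (G z) <= maxoverC C (G x)) ->
         cle K (F z - F xk) (G z)),
      Ksmooth K (Hk G F xk) l,
      Hk G F xk xk = 0
    & forall v, 'd (Hk G F xk) xk v = 0].

End Defs.

From HB Require Import structures.
From mathcomp Require Import all_boot all_order all_algebra.
From mathcomp Require Import all_classical all_reals all_analysis.
From mathcomp Require Import ring lra.
Import Order.TTheory GRing.Theory Num.Theory.
Import numFieldNormedType.Exports.
Local Open Scope classical_set_scope.
Local Open Scope ring_scope.

(* Part (i) is K-smoothness of H_k at x^k, where H_k and its derivative vanish.
   For (ii), the point is that x^{k+1} minimises <c_k^*, G_k>. By strong duality some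
   cb in C has max_C <., G_k(x^{k+1})> <= <cb, G_k(x)> for all x, whence
   <c_k^*, G_k(x^{k+1})> <= max_C <., G_k(x^{k+1})> <= min <cb, G_k> <= min <c_k^*, G_k>.
   Were there no such cb, compactness of C would leave finitely many x covering C;
   minimising a quadratic penalty over C turns them into weights whose barycentre,
   by convexity, would beat x^{k+1}. Since <c_k^*, G_k> is strongly convex with modulus
   <c_k^*, mu>, it grows quadratically away from x^{k+1}; adding property (a) at x^{k+1}
   and (i) at x gives (ii). *)

Lemma le_of_forall_small {R : realFieldType} (a b c : R) :
  (forall t, 0 < t < 1 -> b - t * c <= a) -> b <= a.
Proof.
move=> small; apply/ler_addgt0Pr => e e0.
have c1 : 0 < `|c| + 1 by rewrite ltr_wpDl.
pose t := Num.min 2^-1 (e / (`|c| + 1)).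
have t0 : 0 < t by rewrite lt_min invr_gt0 ltr0n divr_gt0.
have t1 : t < 1 by rewrite gt_min invf_lt1 ?ltr1n.
have tc : t * c <= e.
  have te : t <= e / (`|c| + 1) by rewrite ge_min lexx orbT.
  apply: le_trans (ler_norm _) _; rewrite normrM gtr0_norm //.
  apply: le_trans (ler_wpM2r (normr_ge0 c) te) _.
  rewrite mulrAC ler_pdivrMr // ler_wpM2l ?ltW //; lra.
by have := small t; rewrite t0 t1 => /(_ isT); lra.
Qed.

Lemma sqr_min0_le {R : realDomainType} (a h : R) :
  Num.min (a + h) 0 ^+ 2 <= Num.min a 0 ^+ 2 + 2 * Num.min a 0 * h + h ^+ 2.
Proof. by have [|] := lerP a 0; have [|] := lerP (a + h) 0; nra. Qed.

Lemma quadratic_lb {R : realFieldType} (k l v : R) :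
  0 < k -> - (l ^+ 2 / (2 * k)) <= v * l + 2^-1 * v ^+ 2 * k.
Proof.
move=> k0; rewrite -subr_ge0 opprK.
have -> : v * l + 2^-1 * v ^+ 2 * k + l ^+ 2 / (2 * k) = (k * v + l) ^+ 2 / (2 * k).
  by field; rewrite gt_eqF.
by rewrite divr_ge0 ?sqr_ge0 // mulr_ge0 // ltW.
Qed.

Lemma psumr_gt0_mem {R : numDomainType} {T : eqType} {s : seq T} {F : T -> R} {x0 : T} :
  x0 \in s -> 0 < F x0 -> (forall x, 0 <= F x) -> 0 < \sum_(x <- s) F x.
Proof.
move=> x0s Fx0 F_ge0; rewrite lt_def psumr_neq0 ?sumr_ge0 ?andbT //.
by apply/hasP; exists x0.
Qed.

Section InnerProduct.
Context {R : realType} {m : nat}.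
Implicit Types (a b c y : 'rV[R]_m) (t : R).

Lemma dotvDl a b y : dotv (a + b) y = dotv a y + dotv b y.
Proof. by rewrite /dotv -big_split; apply: eq_bigr => i _; rewrite mxE mulrDl. Qed.

Lemma dotvDr c a b : dotv c (a + b) = dotv c a + dotv c b.
Proof. by rewrite /dotv -big_split; apply: eq_bigr => i _; rewrite mxE mulrDr. Qed.

Lemma dotvZl t a y : dotv (t *: a) y = t * dotv a y.
Proof. by rewrite /dotv mulr_sumr; apply: eq_bigr => i _; rewrite mxE mulrA. Qed.

Lemma dotvZr t c a : dotv c (t *: a) = t * dotv c a.
Proof. by rewrite /dotv mulr_sumr; apply: eq_bigr => i _; rewrite mxE mulrCA. Qed.

Lemma dotvNr c a : dotv c (- a) = - dotv c a.
Proof. by rewrite -scaleN1r dotvZr mulN1r. Qed.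

Lemma dotvBr c a b : dotv c (a - b) = dotv c a - dotv c b.
Proof. by rewrite dotvDr dotvNr. Qed.

Lemma dotv0r c : dotv c 0 = 0.
Proof. by rewrite /dotv big1 // => i _; rewrite mxE mulr0. Qed.

Lemma dotv_sumr (I : Type) (r : seq I) (f : I -> 'rV[R]_m) c :
  dotv c (\sum_(i <- r) f i) = \sum_(i <- r) dotv c (f i).
Proof.
elim: r => [|i r IH]; first by rewrite !big_nil dotv0r.
by rewrite !big_cons dotvDr IH.
Qed.

Lemma sqnormE a : sqnorm a = dotv a a.
Proof. by rewrite /sqnorm /dotv; apply: eq_bigr => i _; rewrite expr2. Qed.

Lemma sqnorm_ge0 a : 0 <= sqnorm a.
Proof. by rewrite /sqnorm sumr_ge0 // => i _; rewrite sqr_ge0. Qed.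

Lemma sqnormZ t a : sqnorm (t *: a) = t ^+ 2 * sqnorm a.
Proof. by rewrite /sqnorm mulr_sumr; apply: eq_bigr => i _; rewrite mxE exprMn. Qed.

Lemma sqnormN a : sqnorm (- a) = sqnorm a.
Proof. by rewrite -scaleN1r sqnormZ sqrrN expr1n mul1r. Qed.

Lemma sqnormB a b : sqnorm (a - b) = sqnorm (b - a).
Proof. by rewrite -sqnormN opprB. Qed.

Lemma sqnorm_gt0 a : a != 0 -> 0 < sqnorm a.
Proof.
move=> a0; rewrite lt_def sqnorm_ge0 andbT; apply: contra a0 => /eqP.
rewrite /sqnorm => /eqP; rewrite psumr_eq0 => [/allP a_eq0|i _]; last exact: sqr_ge0.
apply/eqP/rowP => i; rewrite mxE; apply/eqP; rewrite -sqrf_eq0.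
by have := a_eq0 i (mem_index_enum i).
Qed.

Lemma continuous_dotvl y : continuous (fun c : 'rV[R]_m => dotv c y).
Proof.
have -> : (fun c : 'rV[R]_m => dotv c y) =
          \sum_(i < m) (fun c : 'rV[R]_m => c ord0 i * y ord0 i).
  by apply/funext => c; rewrite fct_sumE.
elim/big_ind: _ => [x|f g cf cg x|i _ x].
- exact: (@cst_continuous _ R^o 0).
- by apply: (@continuousD _ R^o); [exact: cf|exact: cg].
- apply: (@continuousM R _ (fun c : 'rV[R]_m => c ord0 i) (fun=> y ord0 i)).
    exact: coord_continuous.
  exact: cst_continuous.
Qed.

Lemma dotv_interior_gt0 {K : set 'rV[R]_m} {mu c} :
  K° mu -> c != 0 -> (forall k, K k -> 0 <= dotv c k) -> 0 < dotv c mu.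
Proof.
move=> /nbhs_ballP [e /= e0 ball_K] c0 c_dual.
have c1 : 0 < `|c| + 1 by rewrite ltr_wpDl.
pose t := e / (2 * (`|c| + 1)).
have t0 : 0 < t by rewrite divr_gt0 // mulr_gt0.
have : K (mu - t *: c).
  apply: ball_K; rewrite -ball_normE /ball_ /= opprB addrC subrK normrZ gtr0_norm //.
  rewrite /t mulrAC ltr_pdivrMr ?mulr_gt0 // ltr_pM2l //.
  by have := normr_ge0 c; lra.
move=> /c_dual; rewrite dotvBr dotvZr -sqnormE.
by have := sqnorm_gt0 _ c0; nra.
Qed.

End InnerProduct.

Section SetsOfDirections.
Context {R : realType} {m : nat}.
Implicit Types (C K : set 'rV[R]_m) (c y : 'rV[R]_m).

Lemma maxoverC_ub {C c} y : compact C -> C c -> dotv c y <= maxoverC C y.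
Proof.
move=> cC Cc.
have [c1 _ c1_max] := EVT_max_rV (ex_intro _ c Cc) cC
  (continuous_subspaceT (@continuous_dotvl R m y)).
apply: ub_le_sup; last by exists c.
by exists (dotv c1 y) => _ [d Cd <-]; apply: c1_max; rewrite inE.
Qed.

Lemma maxoverC_le {C y} {b : R} :
  C !=set0 -> (forall c, C c -> dotv c y <= b) -> maxoverC C y <= b.
Proof.
move=> [c Cc] le_b; apply: ge_sup; first by exists (dotv c y), c.
by move=> _ [d Cd <-]; apply: le_b.
Qed.

Lemma cone_hull_dual_ge0 {K C} :
  cone_hull C = dual_cone K -> forall c, C c -> forall y, K y -> 0 <= dotv c y.
Proof.
move=> hullE c Cc; have : dual_cone K c.
  by rewrite -hullE; right; exists 1, c; rewrite scale1r.
by apply.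
Qed.

End SetsOfDirections.

Lemma Ksmooth_le_quadratic {R : realType} {n m : nat} {K : set 'rV[R]_m}
    {H : 'rV[R]_n -> 'rV[R]_m} {l : 'rV[R]_m} {x0} :
  Ksmooth K H l -> H x0 = 0 -> (forall v, 'd H x0 v = 0) ->
  forall x, cle K (H x) ((2^-1 * sqnorm (x - x0)) *: l).
Proof.
by case=> _ H_smooth H0 dH0 x; have := H_smooth x0 x; rewrite H0 dH0 subr0 add0r.
Qed.

Section StronglyKConvex.
Context {R : realType} {n m : nat} {K : set 'rV[R]_m} {G : 'rV[R]_n -> 'rV[R]_m}
  {mu : 'rV[R]_m}.
Hypothesis G_sc : strongly_Kconvex K G mu.

Lemma strongly_Kconvex_dotv c x y : (forall k, K k -> 0 <= dotv c k) ->
  dotv c (G x) + dotv c ('d G x (y - x)) + 2^-1 * sqnorm (y - x) * dotv c mu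
    <= dotv c (G y).
Proof.
case: G_sc => _ /(_ x y) sc /(_ _ sc).
by rewrite !(dotvBr, dotvDr, dotvZr); lra.
Qed.

Lemma jensen_dotv c (s : seq 'rV[R]_n) (lam : 'rV[R]_n -> R) :
  (forall k, K k -> 0 <= dotv c k) -> 0 <= dotv c mu ->
  (forall x, 0 <= lam x) -> \sum_(x <- s) lam x = 1 ->
  dotv c (G (\sum_(x <- s) lam x *: x)) <= \sum_(x <- s) lam x * dotv c (G x).
Proof.
move=> c_dual mu_ge0 lam_ge0 lam1; set xb := \sum_(x <- s) _.
have tangent x : dotv c (G xb) + dotv c ('d G xb (x - xb)) <= dotv c (G x).
  apply: le_trans _ (strongly_Kconvex_dotv c xb x c_dual); rewrite lerDl.
  by rewrite mulr_ge0 // mulr_ge0 ?sqnorm_ge0 // invr_ge0.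
apply: le_trans (ler_sum _ (fun x _ => ler_wpM2l (lam_ge0 x) (tangent x))).
under eq_bigr do rewrite mulrDr.
rewrite big_split /= -mulr_suml lam1 mul1r lerDl.
have -> : \sum_(x <- s) lam x * dotv c ('d G xb (x - xb)) =
          \sum_(x <- s) dotv c ('d G xb (lam x *: (x - xb))).
  by apply: eq_bigr => x _; rewrite linearZ dotvZr.
rewrite -dotv_sumr -raddf_sum.
have -> : \sum_(x <- s) lam x *: (x - xb) = 0.
  under eq_bigr do rewrite scalerBr.
  by rewrite sumrB -scaler_suml lam1 scale1r subrr.
by rewrite raddf0 dotv0r.
Qed.

Lemma dotv_min_quadratic_growth c xs x : (forall k, K k -> 0 <= dotv c k) ->
  (forall y, dotv c (G xs) <= dotv c (G y)) ->
  dotv c (G xs) + 2^-1 * sqnorm (xs - x) * dotv c mu <= dotv c (G x).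
Proof.
move=> c_dual xs_min; rewrite sqnormB.
set S := sqnorm (x - xs); set k := dotv c mu.
apply: (le_of_forall_small _ _ (2^-1 * S * k)) => t /andP[t0 t1].
pose yt := xs + t *: (x - xs).
have at_x := strongly_Kconvex_dotv c yt x c_dual.
have at_xs := strongly_Kconvex_dotv c yt xs c_dual.
have e_x : x - yt = (1 - t) *: (x - xs) by rewrite /yt scalerBl scale1r opprD addrA.
have e_xs : xs - yt = (- t) *: (x - xs) by rewrite /yt scaleNr opprD addrA subrr add0r.
rewrite e_x !linearZ /= !dotvZr !sqnormZ -/S -/k in at_x.
rewrite e_xs !linearZ /= !dotvZr !sqnormZ -/S -/k in at_xs.
have Pt_ge := xs_min yt.
have t1_ge0 : 0 <= 1 - t by rewrite subr_ge0 ltW.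
(* the combination [t * at_x + (1 - t) * at_xs] cancels the derivative term *)
have : t * (dotv c (G xs) + (1 - t) * (2^-1 * S * k)) <= t * dotv c (G x).
  have t_at_x := ler_wpM2l (ltW t0) at_x.
  have t_at_xs := ler_wpM2l t1_ge0 at_xs.
  nra.
by rewrite ler_pM2l // mulrBl mul1r; lra.
Qed.

Lemma dotv_has_lbound c : (forall k, K k -> 0 <= dotv c k) -> 0 < dotv c mu ->
  has_lbound [set dotv c (G x) | x in [set: 'rV[R]_n]].
Proof.
move=> c_dual mu_gt0; pose L v := dotv c ('d G 0 v).
exists (dotv c (G 0) + \sum_(j < n) - (L (delta_mx 0 j) ^+ 2 / (2 * dotv c mu))).
move=> _ [y _ <-]; have := strongly_Kconvex_dotv c 0 y c_dual; rewrite subr0.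
apply: le_trans; rewrite -addrA lerD2l.
have -> : dotv c ('d G 0 y) = \sum_(j < n) y 0 j * L (delta_mx 0 j).
  rewrite (_ : \sum_(j < n) _ =
      \sum_(j < n) dotv c ('d G 0 (y 0 j *: delta_mx 0 j))); last first.
    by apply: eq_bigr => j _; rewrite linearZ dotvZr.
  by rewrite -dotv_sumr -raddf_sum -row_sum_delta.
rewrite /sqnorm -mulrA mulr_suml mulr_sumr -big_split /=.
by apply: ler_sum => j _; rewrite mulrA; exact: quadratic_lb.
Qed.

End StronglyKConvex.

Section FiniteMinimax.
Context {R : realType} {m : nat} {C : set 'rV[R]_m} {T : eqType} {s : seq T}
  {g : T -> 'rV[R]_m} {p : R}.

Let gap x c := dotv c (g x) - p.
Let penalty c := \sum_(x <- s) Num.min (gap x c) 0 ^+ 2.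

Lemma continuous_penalty : continuous penalty.
Proof.
have -> : penalty = \sum_(x <- s) (fun c => Num.min (gap x c) 0 ^+ 2).
  by apply/funext => c; rewrite fct_sumE.
elim/big_ind: _ => [c|f1 f2 cf1 cf2 c|x _ c].
- exact: (@cst_continuous _ R^o 0).
- by apply: (@continuousD _ R^o); [exact: cf1|exact: cf2].
have cont_min : continuous (fun c => Num.min (gap x c) 0).
  move=> c1; apply: (@continuous_min R _ (gap x) (fun=> 0)); last exact: cst_continuous.
  apply: (@continuousB _ R^o _ (fun c => dotv c (g x)) (fun=> p)).
    exact: continuous_dotvl.
  exact: cst_continuous.
under eq_fun do rewrite expr2.
exact: (@continuousM R _ (fun c => Num.min (gap x c) 0) (fun c => Num.min (gap x c) 0)
  c (cont_min c) (cont_min c)).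
Qed.

Lemma penalty_first_order c0 c :
  convex_setv C -> C c0 -> C c -> (forall c', C c' -> penalty c0 <= penalty c') ->
  0 <= \sum_(x <- s) Num.min (gap x c0) 0 * (gap x c - gap x c0).
Proof.
move=> cvC Cc0 Cc c0_min; set S := \sum_(x <- s) _.
pose M := \sum_(x <- s) (gap x c - gap x c0) ^+ 2.
suff : 0 <= 2 * S by rewrite pmulr_rge0.
apply: (le_of_forall_small _ _ M) => t /andP[t0 t1].
have gap_t x : gap x ((1 - t) *: c0 + t *: c) = gap x c0 + t * (gap x c - gap x c0).
  by rewrite /gap dotvDl !dotvZl; ring.
have := c0_min _ (cvC _ _ _ Cc0 Cc (ltW t0) (ltW t1)).
have : penalty ((1 - t) *: c0 + t *: c) <= penalty c0 + t * (2 * S) + t ^+ 2 * M.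
  rewrite /penalty /S /M !mulr_sumr -!big_split /=; apply: ler_sum => x _.
  rewrite gap_t (le_trans (sqr_min0_le _ _)) // le_eqVlt; apply/orP; left.
  by apply/eqP; ring.
move=> penalty_le penalty_ge.
have : 0 <= t * (2 * S + t * M) by rewrite mulrDr [t * (t * M)]mulrA -expr2; lra.
by rewrite pmulr_rge0 //; lra.
Qed.

Lemma finite_minimax :
  compact C -> convex_setv C -> C !=set0 ->
  (forall c, C c -> exists2 x, x \in s & dotv c (g x) < p) ->
  exists lam : T -> R, [/\ forall x, 0 <= lam x, \sum_(x <- s) lam x = 1 &
    exists2 d, 0 < d & forall c, C c -> \sum_(x <- s) lam x * dotv c (g x) <= p - d].
Proof.
move=> cC cvC C0 cover.
have [c0 /set_mem Cc0 c0_min] :=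
  EVT_min_rV C0 cC (continuous_subspaceT continuous_penalty).
pose w x := Num.min (gap x c0) 0.
have w_le0 x : w x <= 0 by rewrite ge_min lexx orbT.
have [x0 x0s gx0] := cover c0 Cc0.
have wx0 : w x0 < 0 by rewrite /w (min_l (ltW _)) // /gap subr_lt0.
have penalty_gt0 : 0 < penalty c0.
  apply: (psumr_gt0_mem x0s) => [|x]; last exact: sqr_ge0.
  by rewrite -/(w x0); nra.
have penaltyE : penalty c0 = \sum_(x <- s) w x * gap x c0.
  by apply: eq_bigr => x _; rewrite /w; have [|] := lerP (gap x c0) 0;
    rewrite expr2 // !mul0r.
have penalty_le c : C c -> penalty c0 <= \sum_(x <- s) w x * gap x c.
  move=> Cc; have := penalty_first_order _ _ cvC Cc0 Cc
    (fun c' Cc' => c0_min c' (mem_set Cc')).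
  by under eq_bigr do rewrite mulrBr; rewrite sumrB subr_ge0 -penaltyE.
pose sig := \sum_(x <- s) - w x.
have sig_gt0 : 0 < sig.
  by apply: (psumr_gt0_mem x0s) => [|x] /=; rewrite ?oppr_gt0 ?oppr_ge0.
exists (fun x => - w x / sig); split.
- by move=> x; rewrite divr_ge0 ?oppr_ge0 // ltW.
- by rewrite -mulr_suml divff // gt_eqF.
exists (penalty c0 / sig); first by rewrite divr_gt0.
move=> c /penalty_le; set X := \sum_(x <- s) - w x * dotv c (g x).
have -> : \sum_(x <- s) w x * gap x c = p * sig - X.
  by rewrite /sig mulr_sumr -sumrB; apply: eq_bigr => x _; rewrite /gap; ring.
have -> : \sum_(x <- s) - w x / sig * dotv c (g x) = X / sig.
  by rewrite /X mulr_suml; apply: eq_bigr => x _; ring.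
by move=> le_penalty; rewrite ler_pdivrMr // mulrBl divfK ?gt_eqF //; lra.
Qed.

End FiniteMinimax.

Section StrongDuality.
Context {R : realType} {n m : nat} {K C : set 'rV[R]_m} {G : 'rV[R]_n -> 'rV[R]_m}
  {mu : 'rV[R]_m}.
Hypotheses (cC : compact C) (cvC : convex_setv C)
  (C_dual : forall c, C c -> forall k, K k -> 0 <= dotv c k) (Kmu : K mu)
  (G_sc : strongly_Kconvex K G mu).

Lemma strong_duality xs : C !=set0 ->
  (forall x, maxoverC C (G xs) <= maxoverC C (G x)) ->
  exists2 cb, C cb & forall x, maxoverC C (G xs) <= dotv cb (G x).
Proof.
move=> C0 xs_min; set p := maxoverC C (G xs).
apply: contrapT => no_cb.
have cover c : C c -> exists x, dotv c (G x) < p.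
  move=> Cc; apply: contrapT => no_x; apply: no_cb; exists c => // x.
  by rewrite leNgt; apply/negP => lt_p; apply: no_x; exists x.
have open_lt x : setT x -> open [set c : 'rV[R]_m | dotv c (G x) < p].
  by move=> _; have := @open_comp _ _ (fun c : 'rV[R]_m => dotv c (G x)) [set r | r < p]
    (fun c _ => continuous_dotvl (G x) c) (@open_lt _ p).
have := cC; rewrite compact_cover => /(_ _ setT _ open_lt) [|D _ D_cover].
  by move=> c /cover [x lt_p]; exists x.
have [lam [lam_ge0 lam1 [d d_gt0 le_d]]] := finite_minimax cC cvC C0
  (fun c Cc => let: ex_intro2 x xD lt_p := D_cover c Cc in ex_intro2 _ _ x xD lt_p).
have := xs_min (\sum_(x <- finmap.enum_fset D) lam x *: x).
suff : maxoverC C (G (\sum_(x <- finmap.enum_fset D) lam x *: x)) <= p - d.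
  by rewrite -/p; lra.
apply: maxoverC_le C0 _ => c Cc; apply: le_trans (le_d c Cc).
exact: jensen_dotv G_sc _ _ _ (C_dual c Cc) (C_dual c Cc mu Kmu) lam_ge0 lam1.
Qed.

Lemma dual_argmax_minimizes xs ck :
  (forall x, maxoverC C (G xs) <= maxoverC C (G x)) ->
  C ck -> 0 < dotv ck mu -> (forall d, C d -> minoverX G d <= minoverX G ck) ->
  forall y, dotv ck (G xs) <= dotv ck (G y).
Proof.
move=> xs_min Cck ck_mu ck_max y.
have [cb Ccb cb_le] := strong_duality xs (ex_intro _ ck Cck) xs_min.
apply: le_trans (maxoverC_ub (G xs) cC Cck) _.
apply: (@le_trans _ _ (minoverX G cb)).
  apply: lb_le_inf; first by exists (dotv cb (G 0)), 0.
  by move=> _ [z _ <-]; exact: cb_le.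
apply: le_trans (ck_max cb Ccb) _; apply: ge_inf; last by exists y.
exact: dotv_has_lbound G_sc _ (C_dual ck Cck) ck_mu.
Qed.

End StrongDuality.

Theorem lemma3p1 (R : realType) (n m : nat) (K C : set 'rV[R]_m)
  (F G : 'rV[R]_n -> 'rV[R]_m) (l mu : 'rV[R]_m) (xk xk1 : 'rV[R]_n)
  (ck : 'rV[R]_m) :
  proper_cone K ->
  compact C -> convex_setv C -> ~ C 0 -> cone_hull C = dual_cone K ->
  (forall x, differentiable F x) ->
  K l -> K° mu ->
  surrogate K C l mu F xk G ->
  (forall x, maxoverC C (G xk1) <= maxoverC C (G x)) ->
  C ck -> (forall d, C d -> minoverX G d <= minoverX G ck) ->
  forall x,
    cle K (Hk G F xk x) ((2^-1 * sqnorm (x - xk)) *: l) /\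
    dotv ck (F xk1) + 2^-1 * sqnorm (xk1 - x) * dotv ck mu
      <= dotv ck (F x) + 2^-1 * sqnorm (xk - x) * dotv ck l.
Proof.
move=> _ cC cvC notC0 hullE _ _ mu_int [G_sc G_major H_smooth H0 dH0] xk1_min Cck
  ck_max x.
have C_dual := cone_hull_dual_ge0 hullE.
have ck_dual := C_dual ck Cck.
have H_le := Ksmooth_le_quadratic H_smooth H0 dH0.
split; first exact: H_le.
have ck_mu : 0 < dotv ck mu.
  by apply: dotv_interior_gt0 mu_int _ ck_dual; apply/eqP => ck0; rewrite ck0 in Cck.
have ck_min := dual_argmax_minimizes cC cvC C_dual (interior_subset mu_int) G_sc
  xk1 ck xk1_min Cck ck_mu ck_max.
have growth := dotv_min_quadratic_growth G_sc _ _ x ck_dual ck_min.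
have major := ck_dual _ (G_major xk1 xk1_min).
have smooth := ck_dual _ (H_le x).
rewrite /Hk !(dotvBr, dotvDr, dotvZr) in major smooth.
by rewrite (sqnormB xk x); lra.
Qed.
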